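(* Let $X$ be a non-negative heavy-tailed random variable and let $h_X$ be a natural scale of $X$. Then the map $c\mapsto \mathbb{I}_{h_X}(cX)$, defined for $c>0$, is continuous at $c=1$ (where its value is $1$).
   Context: $R_Y(x):=-\log P(Y>x)$. $Y$ is heavy-tailed if $E(e^{sY})=\infty$ for all $s>0$. A natural scale of a heavy-tailed $Y$ is a concave $h:[0,\infty)\to[0,\infty)$ with $h(0)=0$, $h(x)\to\infty$, and $\liminf_{x\to\infty}R_Y(x)/h(x)=1$. For a continuous increasing $h:[0,\infty)\to[0,\infty)$ with $h(x)\to\infty$, $\mathbb{I}_h(Y):=\liminf_{x\to\infty}R_Y(x)/h(x)$, which equals $\sup\{s\ge0: E(e^{s h(Y)})<\infty\}$ for non-negative $Y$. *)

From Stdlib Require Import Reals Lra.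
Open Scope R_scope.

(* A non-negative random variable X is represented by its law, i.e. by its
   survival function G x = P(X > x).  Such functions are exactly the
   nonincreasing, right-continuous functions with values in [0,1] that equal
   1 on (-oo,0) (non-negativity) and tend to 0 at +oo. *)
Definition survival_nonneg (G : R -> R) : Prop :=
  (forall x, 0 <= G x <= 1) /\
  (forall x y, x <= y -> G y <= G x) /\
  (forall x, x < 0 -> G x = 1) /\
  (forall x eps, 0 < eps -> exists d, 0 < d /\ forall y, x <= y < x + d -> Rabs (G y - G x) < eps) /\
  (forall eps, 0 < eps -> exists M, forall x, M <= x -> G x < eps).

(* Expectation of a non-negative random variable Z with survival function S is
   E Z = int_0^oo P(Z > t) dt.  For S nonincreasing this (Lebesgue) integral is
   the supremum of the lower (right-endpoint) Riemann sums over uniform grids of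
   [0,T]; E Z < oo iff these sums are bounded. *)
Definition lower_sum (Sv : R -> R) (T : R) (n : nat) : R :=
  sum_f_R0 (fun i => Sv (T * INR (Datatypes.S i) / INR (Datatypes.S n)) * (T / INR (Datatypes.S n))) n.

Definition finite_expectation (Sv : R -> R) : Prop :=
  exists M, forall T n, 0 < T -> lower_sum Sv T n <= M.

(* P(e^{sX} > t) = P(X > ln t / s) for t > 0, s > 0. *)
Definition mgf_finite (G : R -> R) (s : R) : Prop :=
  finite_expectation (fun t => G (ln t / s)).

Definition heavy_tailed (G : R -> R) : Prop :=
  forall s, 0 < s -> ~ mgf_finite G s.

Definition Rfun (G : R -> R) (x : R) : R := - ln (G x).

Definition is_liminf_infty (f : R -> R) (l : R) : Prop :=
  forall eps, 0 < eps ->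
    (exists y, forall x, y <= x -> l - eps < f x) /\
    (forall y, exists x, y <= x /\ f x < l + eps).

Definition I_h_is (h : R -> R) (G : R -> R) (l : R) : Prop :=
  is_liminf_infty (fun x => Rfun G x / h x) l.

Definition natural_scale (h : R -> R) (G : R -> R) : Prop :=
  (forall x, 0 <= x -> 0 <= h x) /\
  (forall x y t, 0 <= x -> 0 <= y -> 0 <= t <= 1 ->
      t * h x + (1 - t) * h y <= h (t * x + (1 - t) * y)) /\
  h 0 = 0 /\
  (forall M, exists y, forall x, y <= x -> M <= h x) /\
  I_h_is h G 1.

Definition scale_surv (c : R) (G : R -> R) : R -> R := fun x => G (x / c).

(** Concavity and [h 0 = 0] make [h] nondecreasing with [h (k x) >= min k 1 * h x]
    for [k > 0], so [h (x / c) / h x] is eventually trapped in [[m, 1/m]] with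
    [m = min c (1/c)].  Since [R_{cX}(x) = R_X(x/c)], the ratio [R_{cX}(x) / h x]
    is [R_X(x/c) / h(x/c)], whose liminf is [1], times that trapped factor; hence
    [I_h(cX)] exists and lies in [[m, 1/m]], which shrinks to [{1}] as [c -> 1]. *)
From Stdlib Require Import Reals Lra Classical.
Open Scope R_scope.

Lemma is_liminf_infty_ge (f : R -> R) (l A : R) :
  is_liminf_infty f l ->
  (forall eps, 0 < eps -> exists y, forall x, y <= x -> A - eps <= f x) ->
  A <= l.
Proof.
  intros Hl Hlow.
  destruct (Rle_lt_dec A l) as [Hle|Hlt]; [exact Hle|].
  set (d := (A - l) / 2).
  destruct (Hlow d ltac:(unfold d; lra)) as [y Hy].
  destruct (proj2 (Hl d ltac:(unfold d; lra)) y) as [x [Hx Hfx]].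
  specialize (Hy x Hx). unfold d in *. lra.
Qed.

Lemma is_liminf_infty_le (f : R -> R) (l B : R) :
  is_liminf_infty f l ->
  (forall eps, 0 < eps -> forall y, exists x, y <= x /\ f x <= B + eps) ->
  l <= B.
Proof.
  intros Hl Hup.
  destruct (Rle_lt_dec l B) as [Hle|Hlt]; [exact Hle|].
  set (d := (l - B) / 2).
  destruct (proj1 (Hl d ltac:(unfold d; lra))) as [y Hy].
  destruct (Hup d ltac:(unfold d; lra) y) as [x [Hx Hfx]].
  specialize (Hy x Hx). unfold d in *. lra.
Qed.

Lemma is_liminf_infty_exists (f : R -> R) (A B : R) :
  (forall eps, 0 < eps -> exists y, forall x, y <= x -> A - eps <= f x) ->
  (forall eps, 0 < eps -> forall y, exists x, y <= x /\ f x <= B + eps) ->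
  exists l, is_liminf_infty f l /\ A <= l <= B.
Proof.
  intros Hlow Hup.
  (* [l] is the supremum of the eventual lower bounds of [f]. *)
  set (E := fun a => exists y, forall x, y <= x -> a <= f x).
  assert (HE : bound E).
  { exists (B + 1). intros a [y Hy].
    destruct (Hup 1 Rlt_0_1 y) as [x [Hx Hfx]].
    specialize (Hy x Hx). lra. }
  assert (HEne : exists a, E a) by (exists (A - 1); exact (Hlow 1 Rlt_0_1)).
  destruct (completeness E HE HEne) as [l [Hub Hlub]].
  assert (Hl : is_liminf_infty f l).
  { intros eps Heps. split.
    - apply NNPP. intro Hnot.
      assert (Hle : is_upper_bound E (l - eps)).
      { intros a [y Hy]. apply Rnot_lt_le. intro Ha.
        apply Hnot. exists y. intros x Hx. specialize (Hy x Hx). lra. }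
      specialize (Hlub _ Hle). lra.
    - intro y. apply NNPP. intro Hnot.
      assert (HEl : E (l + eps)).
      { exists y. intros x Hx. apply Rnot_lt_le. intro Hfx.
        apply Hnot. exists x. split; assumption. }
      specialize (Hub _ HEl). lra. }
  exists l. split; [exact Hl|].
  split; [exact (is_liminf_infty_ge f l A Hl Hlow)
         |exact (is_liminf_infty_le f l B Hl Hup)].
Qed.

Lemma is_liminf_infty_eventually_ext (f g : R -> R) (l : R) :
  (exists y, forall x, y <= x -> f x = g x) ->
  is_liminf_infty f l -> is_liminf_infty g l.
Proof.
  intros [y0 Hfg] Hl eps Heps.
  destruct (Hl eps Heps) as [[y1 Hy1] Hfreq]. split.
  - exists (Rmax y0 y1). intros x Hx.
    rewrite <- Hfg by (pose proof (Rmax_l y0 y1); lra).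
    apply Hy1. pose proof (Rmax_r y0 y1). lra.
  - intro y. destruct (Hfreq (Rmax y y0)) as [x [Hx Hfx]].
    pose proof (Rmax_l y y0). pose proof (Rmax_r y y0).
    exists x. split; [lra|]. rewrite <- Hfg by lra. exact Hfx.
Qed.

Lemma is_liminf_infty_comp_div (f : R -> R) (l c : R) :
  0 < c -> is_liminf_infty f l -> is_liminf_infty (fun x => f (x / c)) l.
Proof.
  intros Hc Hl eps Heps.
  destruct (Hl eps Heps) as [[y0 Hy0] Hfreq]. split.
  - exists (c * y0). intros x Hx. apply Hy0.
    apply Rmult_le_reg_l with c; [exact Hc|].
    replace (c * (x / c)) with x by (field; lra). exact Hx.
  - intro y. destruct (Hfreq (y / c)) as [x [Hx Hfx]].
    exists (c * x). split.
    + replace y with (c * (y / c)) by (field; lra).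
      apply Rmult_le_compat_l; lra.
    + replace (c * x / c) with x by (field; lra). exact Hfx.
Qed.

Lemma is_liminf_infty_mul_bounded (u g : R -> R) (l a b : R) :
  is_liminf_infty u l -> 0 <= l -> 0 < a ->
  (exists y, forall x, y <= x -> a <= g x <= b) ->
  exists l', is_liminf_infty (fun x => u x * g x) l' /\ a * l <= l' <= b * l.
Proof.
  intros Hl Hl0 Ha [y0 Hg].
  assert (Hab : a <= b) by (specialize (Hg y0 (Rle_refl y0)); lra).
  assert (Hb_div : forall eps, 0 < eps -> 0 < eps / b /\ b * (eps / b) = eps).
  { intros eps Heps. split; [apply Rdiv_lt_0_compat|field]; lra. }
  apply is_liminf_infty_exists.
  - intros eps Heps. destruct (Hb_div eps Heps) as [Hd Hbd].
    destruct (proj1 (Hl (eps / b) Hd)) as [y1 Hy1].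
    exists (Rmax y0 y1). intros x Hx.
    pose proof (Rmax_l y0 y1). pose proof (Rmax_r y0 y1).
    specialize (Hg x ltac:(lra)). specialize (Hy1 x ltac:(lra)).
    destruct (Rle_lt_dec 0 (u x)); nra.
  - intros eps Heps y. destruct (Hb_div eps Heps) as [Hd Hbd].
    destruct (proj2 (Hl (eps / b) Hd) (Rmax y y0)) as [x [Hx Hux]].
    pose proof (Rmax_l y y0). pose proof (Rmax_r y y0).
    specialize (Hg x ltac:(lra)).
    exists x. split; [lra|].
    destruct (Rle_lt_dec 0 (u x)); nra.
Qed.

Section ConcaveScale.

Variable h : R -> R.
Hypothesis h_nonneg : forall x, 0 <= x -> 0 <= h x.
Hypothesis h_concave : forall x y t, 0 <= x -> 0 <= y -> 0 <= t <= 1 ->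
  t * h x + (1 - t) * h y <= h (t * x + (1 - t) * y).
Hypothesis h_zero : h 0 = 0.
Hypothesis h_unbounded : forall M, exists y, forall x, y <= x -> M <= h x.

Lemma concave_nondecreasing (x y : R) : 0 <= x -> x <= y -> h x <= h y.
Proof.
  intros Hx Hxy.
  destruct (Req_dec x y) as [<-|Hne]; [lra|].
  (* Write [y] as a convex combination of [x] and a far point [z] with [h z >= h x]. *)
  destruct (h_unbounded (h x)) as [y1 Hy1].
  set (z := Rmax (y + 1) y1).
  assert (Hz : y + 1 <= z) by apply Rmax_l.
  assert (Hhz : h x <= h z) by (apply Hy1; apply Rmax_r).
  set (t := (z - y) / (z - x)).
  assert (Ht : 0 <= t <= 1).
  { unfold t. split.
    - apply Rle_mult_inv_pos; lra.
    - apply Rmult_le_reg_r with (z - x); [lra|].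
      unfold Rdiv. rewrite Rmult_assoc, Rinv_l; lra. }
  assert (Hy : t * x + (1 - t) * z = y) by (unfold t; field; lra).
  pose proof (h_concave x z t Hx ltac:(lra) Ht) as Hconc.
  rewrite Hy in Hconc. nra.
Qed.

Lemma concave_scale_ge (k m x : R) :
  0 < k -> m <= 1 -> m <= k -> 0 <= x -> m * h x <= h (k * x).
Proof.
  intros Hk Hm1 Hmk Hx.
  pose proof (h_nonneg x Hx).
  destruct (Rle_lt_dec 1 k) as [Hk1|Hk1].
  - assert (h x <= h (k * x)) by (apply concave_nondecreasing; nra). nra.
  - pose proof (h_concave x 0 k Hx (Rle_refl 0) ltac:(lra)) as Hconc.
    rewrite h_zero, !Rmult_0_r, !Rplus_0_r in Hconc. nra.
Qed.

Lemma concave_ratio_div_bounded (c : R) :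
  0 < c ->
  exists y, forall x, y <= x ->
    Rmin c (/ c) <= h (x / c) / h x <= / Rmin c (/ c).
Proof.
  intros Hc.
  set (m := Rmin c (/ c)).
  assert (Hci : 0 < / c) by (apply Rinv_0_lt_compat; exact Hc).
  assert (Hm0 : 0 < m) by (unfold m; apply Rmin_case; lra).
  assert (Hm1 : m <= 1).
  { unfold m. destruct (Rle_lt_dec c 1).
    - pose proof (Rmin_l c (/ c)). lra.
    - assert (/ c < 1) by (rewrite <- Rinv_1; apply Rinv_lt_contravar; lra).
      pose proof (Rmin_r c (/ c)). lra. }
  destruct (h_unbounded 1) as [y1 Hy1].
  exists (Rmax 0 y1). intros x Hx.
  pose proof (Rmax_l 0 y1). pose proof (Rmax_r 0 y1).
  assert (Hhx : 1 <= h x) by (apply Hy1; lra).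
  assert (Hxc : 0 <= x / c) by (apply Rle_mult_inv_pos; lra).
  assert (Hlow : m * h x <= h (x / c)).
  { replace (x / c) with (/ c * x) by (field; lra).
    apply concave_scale_ge; [exact Hci|exact Hm1|apply Rmin_r|lra]. }
  assert (Hup : m * h (x / c) <= h x).
  { replace x with (c * (x / c)) at 2 by (field; lra).
    apply concave_scale_ge; [exact Hc|exact Hm1|apply Rmin_l|exact Hxc]. }
  split.
  - apply Rmult_le_reg_r with (h x); [lra|].
    unfold Rdiv. rewrite Rmult_assoc, Rinv_l; lra.
  - apply Rmult_le_reg_l with (m * h x); [nra|].
    replace (m * h x * (h (x / c) / h x)) with (m * h (x / c)) by (field; lra).
    replace (m * h x * / m) with (h x) by (field; lra).
    exact Hup.
Qed.

End ConcaveScale.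

Lemma I_h_scale_surv_between (G h : R -> R) (c : R) :
  natural_scale h G -> 0 < c ->
  exists l, I_h_is h (scale_surv c G) l /\ Rmin c (/ c) <= l <= / Rmin c (/ c).
Proof.
  intros [Hnn [Hconc [H0 [Hunb HI]]]] Hc.
  destruct (is_liminf_infty_mul_bounded
              (fun x => Rfun G (x / c) / h (x / c)) (fun x => h (x / c) / h x)
              1 (Rmin c (/ c)) (/ Rmin c (/ c))) as [l [Hl Hbounds]].
  - exact (is_liminf_infty_comp_div (fun x => Rfun G x / h x) 1 c Hc HI).
  - lra.
  - apply Rmin_case; [exact Hc|apply Rinv_0_lt_compat; exact Hc].
  - exact (concave_ratio_div_bounded h Hnn Hconc H0 Hunb c Hc).
  - exists l. split; [|lra].
    refine (is_liminf_infty_eventually_ext _ _ l _ Hl).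
    destruct (Hunb 1) as [y1 Hy1].
    exists (Rmax y1 (c * y1)). intros x Hx.
    pose proof (Rmax_l y1 (c * y1)). pose proof (Rmax_r y1 (c * y1)).
    assert (Hhx : 1 <= h x) by (apply Hy1; lra).
    assert (Hhxc : 1 <= h (x / c)).
    { apply Hy1. apply Rmult_le_reg_l with c; [exact Hc|].
      replace (c * (x / c)) with x by (field; lra). lra. }
    unfold Rfun, scale_surv. field. lra.
Qed.

Lemma Rmin_inv_gt (c d : R) :
  0 < c -> Rabs (c - 1) < d -> 1 - d < Rmin c (/ c).
Proof.
  intros Hc Hcd.
  apply Rabs_def2 in Hcd.
  apply Rmin_case; [lra|].
  (* [1 / c > 1 / (1 + d) >= 1 - d]. *)
  apply Rmult_lt_reg_r with c; [exact Hc|].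
  rewrite Rinv_l by lra. nra.
Qed.

Theorem lemma4p2 (G h : R -> R) :
  survival_nonneg G -> heavy_tailed G -> natural_scale h G ->
  I_h_is h (scale_surv 1 G) 1 /\
  (forall eps, 0 < eps -> exists delta, 0 < delta /\
     forall c, 0 < c -> Rabs (c - 1) < delta ->
       exists l, I_h_is h (scale_surv c G) l /\ Rabs (l - 1) < eps).
Proof.
  intros _ _ Hscale. split.
  - destruct (I_h_scale_surv_between G h 1 Hscale Rlt_0_1) as [l [Hl Hbounds]].
    rewrite Rinv_1, Rmin_left, Rinv_1 in Hbounds by lra.
    replace l with 1 in Hl by lra. exact Hl.
  - intros eps Heps.
    set (delta := eps / (2 + eps)).
    assert (Hdelta : 0 < delta < 1 /\ delta < eps /\ / (1 - delta) = 1 + eps / 2).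
    { unfold delta. repeat split.
      - apply Rdiv_lt_0_compat; lra.
      - apply Rmult_lt_reg_r with (2 + eps); [lra|]. field_simplify; lra.
      - apply Rmult_lt_reg_r with (2 + eps); [lra|]. field_simplify; nra.
      - field. lra. }
    exists delta. split; [lra|].
    intros c Hc Hcd.
    destruct (I_h_scale_surv_between G h c Hscale Hc) as [l [Hl [Hlow Hup]]].
    pose proof (Rmin_inv_gt c delta Hc Hcd) as Hm.
    assert (Hinv : / Rmin c (/ c) < / (1 - delta))
      by (apply Rinv_lt_contravar; [apply Rmult_lt_0_compat|]; lra).
    exists l. split; [exact Hl|].
    apply Rabs_def1; lra.
Qed.
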